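(* In the lace-expansion setting described in the context, suppose $\sum_x|x|^M|\Pi(x)|<\infty$ for a positive integer $M$. Then for every $1\le m\le M$ and $j=1,\dots,d$ there is a constant $c$ (possibly depending on $m$) such that $$\Big|\frac{\partial^m}{\partial k_j^m}\hat G(k)\Big|\le\frac{c}{|k|^{2+m}}\qquad(k\in[-\pi,\pi]^d\setminus\{0\}).$$
   Context: Lace-expansion setting: $d\ge3$; $\Pi:\mathbb{Z}^d\to\mathbb{R}$ is $\mathbb{Z}^d$-symmetric (invariant under permutations and sign changes of coordinates) with $\sum_x|x|^2|\Pi(x)|<\infty$, and $\hat\Pi(k)=\sum_x\Pi(x)e^{-ik\cdot x}$. Let $\hat D(k)=\frac1d\sum_{j=1}^d\cos k_j$, and let $p>0$, $G_0>0$ be constants. $(\hat J,\hat g)$ is one of: (a) $\hat J=2dp\hat D+\hat\Pi$, $\hat g=1$; (b) $\hat J=2dp\hat D(1+\hat\Pi)$, $\hat g=1+\hat\Pi$; (c) $\hat J=2dp\hat D(G_0+\hat\Pi)$, $\hat g=G_0+\hat\Pi$. It is assumed that $\hat J(0)=1$ and that there is $c_1>0$ with $\hat J(0)-\hat J(k)\ge c_1|k|^2$ for all $k\in[-\pi,\pi]^d$. Set $\hat G(k)=\hat g(k)/(1-\hat J(k))$ and $G(x)=\int_{[-\pi,\pi]^d}\frac{d^dk}{(2\pi)^d}e^{ik\cdot x}\hat G(k)$. *)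

From HB Require Import structures.
From mathcomp Require Import all_boot all_order all_algebra. From mathcomp Require Import perm.
From mathcomp Require Import all_classical all_reals all_analysis.
Set Implicit Arguments. Unset Strict Implicit. Unset Printing Implicit Defensive.
Import Order.TTheory GRing.Theory Num.Theory numFieldNormedType.Exports.
Local Open Scope ring_scope.

Section LaceDefs.
Variables (R : realType) (d : nat).

Definition zpt := 'I_d -> int.

Definition znorm (x : zpt) : R := Num.sqrt (\sum_(i < d) ((x i)%:~R) ^+ 2).
Definition rnorm (k : 'I_d -> R) : R := Num.sqrt (\sum_(i < d) (k i) ^+ 2).

Definition dotkx (k : 'I_d -> R) (x : zpt) : R := \sum_(i < d) k i * (x i)%:~R.

(* The point of the box [-N,N]^d coded by y. *)
Definition boxpt (N : nat) (y : {ffun 'I_d -> 'I_(N.*2.+1)}) : zpt :=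
  fun i => (nat_of_ord (y i))%:Z - N%:Z.

Definition boxsum (N : nat) (F : zpt -> R) : R :=
  \sum_(y : {ffun 'I_d -> 'I_(N.*2.+1)}) F (boxpt y).

(* sum_x |x|^M |Pi x| < oo  (the partial sums over boxes are nondecreasing,
   so finiteness is boundedness of the box partial sums). *)
Definition moment_finite (M : nat) (Pi : zpt -> R) : Prop :=
  exists B : R, forall N, boxsum N (fun x => znorm x ^+ M * `|Pi x|) <= B.

Definition Zd_symmetric (Pi : zpt -> R) : Prop :=
  forall (s : {perm 'I_d}) (eps : 'I_d -> bool) (x : zpt),
    Pi (fun i => (-1) ^+ eps i * x (s i)) = Pi x.

(* Fourier transform hat Pi(k) = sum_x Pi(x) e^{-i k.x}, as the limit of the
   box partial sums (the series converges absolutely).  Since Pi is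
   Z^d-symmetric, the sine part vanishes, so hat Pi(k) = sum_x Pi(x) cos(k.x). *)
Definition hatPi (Pi : zpt -> R) (k : 'I_d -> R) : R :=
  limn (fun N => boxsum N (fun x => Pi x * cos (dotkx k x))).

Definition hatD (k : 'I_d -> R) : R := (d%:R)^-1 * \sum_(j < d) cos (k j).

Definition in_torus (k : 'I_d -> R) : Prop := forall j, - pi <= k j <= pi.

Definition zerok : 'I_d -> R := fun _ => 0.

Definition along (f : ('I_d -> R) -> R) (k : 'I_d -> R) (j : 'I_d) : R -> R :=
  fun t => f (fun i => k i + (if i == j then t else 0)).

Definition partialn (m : nat) (f : ('I_d -> R) -> R) (k : 'I_d -> R) (j : 'I_d) : R :=
  derive1n m (along f k j) 0.

Definition partialn_exists (m : nat) (f : ('I_d -> R) -> R) (k : 'I_d -> R) (j : 'I_d) : Prop :=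
  forall i, (i < m)%N -> \forall t \near (0 : R), derivable (derive1n i (along f k j)) t 1.

End LaceDefs.

From HB Require Import structures.
From mathcomp Require Import all_boot all_order all_algebra. From mathcomp Require Import perm.
From mathcomp Require Import all_classical all_reals all_analysis.
From mathcomp Require Import ring lra zify.
Import Order.TTheory GRing.Theory Num.Theory numFieldNormedType.Exports.
Set Implicit Arguments. Unset Strict Implicit. Unset Printing Implicit Defensive.
Local Open Scope classical_set_scope.
Local Open Scope ring_scope.

(* Fix [k <> 0] in the torus and a direction [j], let [dl = |k|], and follow the line
   [t |-> f (k + t e_j)].  Along it [hatD] and [hatPi] have derivatives of order [<= M]
   bounded uniformly in [k] (for [hatPi] by termwise differentiation of its Fourier series,
   which the [M]-th moment allows), and their first derivatives are [O(dl)] because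
   [|sin (k.x)| <= |k| |x|] (this uses the second moment).  The same profile passes to [g]
   and [1 - J], while [|1 - J| >= c1 dl^2] at [t = 0].  Induction on the order through
   [(1/v)' = - v' (1/v)^2] gives [|(1/v)^(i)(0)| <= K dl^(-2-i)], and Leibniz' rule the same
   bound for [g/(1 - J)]; the constant is uniform in [k] because [dl <= 1 + d pi^2]. *)

Lemma derive1nSr (R : realType) (f : R -> R) i : derive1n i.+1 f = derive1n i (derive1 f).
Proof. by rewrite /derive1n iterSr. Qed.

Section DerivBound.
Variables (R : realType) (dl : R).
Hypothesis dl_gt0 : 0 < dl.

(* [f] behaves like a function homogeneous of degree [e] in [dl]:
   [|f^(i)(0)| <= K dl^(e-i)] for [i <= m]. *)
Fixpoint deriv_bound (K : R) (m : nat) (e : int) (f : R -> R) : Prop :=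
  match m with
  | 0 => `|f 0| <= K * dl ^ e
  | m'.+1 => `|f 0| <= K * dl ^ e /\ (\forall t \near (0 : R), derivable f t 1)
             /\ deriv_bound K m' (e - 1) (derive1 f)
  end.

Lemma deriv_bound_at0 K m e f : deriv_bound K m e f -> `|f 0| <= K * dl ^ e.
Proof. by case: m => [|m] //= []. Qed.

Lemma deriv_bound_ge0 K m e f : deriv_bound K m e f -> 0 <= K.
Proof.
move/deriv_bound_at0/(le_trans (normr_ge0 _)).
by rewrite pmulr_lge0 // exprz_gt0.
Qed.

Lemma deriv_bound_near K m e f g :
  (\forall t \near (0 : R), f t = g t) -> deriv_bound K m e f -> deriv_bound K m e g.
Proof.
elim: m e f g => [|m IH] e f g fg /=; first by rewrite -(nbhs_singleton fg).
move=> [f0 [df bf']]; split; first by rewrite -(nbhs_singleton fg).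
have fg_near := nbhs_interior fg.
split.
  by near=> t; apply: (near_eq_derivable (f := f)); [near: t | near: t].
apply: IH bf'; near=> t; rewrite !derive1E; apply: near_eq_derive.
by near: t.
Unshelve. all: by end_near. Qed.

Lemma deriv_bound_le K K' m e f : K <= K' -> deriv_bound K m e f -> deriv_bound K' m e f.
Proof.
move=> KK'; have le_scale e' : K * dl ^ e' <= K' * dl ^ e'.
  by rewrite ler_wpM2r // ltW ?exprz_gt0.
elim: m e f => [|m IH] e f /=; first by move/le_trans; apply.
move=> [f0 [df bf']]; split; first exact: le_trans f0 (le_scale _).
by split => //; exact: IH.
Qed.

Lemma deriv_bound_pred K m e f : deriv_bound K m.+1 e f -> deriv_bound K m e f.
Proof.
elim: m e f => [|m IH] e f /=; first by case.
by move=> [f0 [df bf']]; split => //; split => //; exact: IH.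
Qed.

Lemma deriv_bound_leq K m n e f : (n <= m)%N -> deriv_bound K m e f -> deriv_bound K n e f.
Proof.
elim: m => [|m IH]; first by rewrite leqn0 => /eqP->.
by rewrite leq_eqVlt ltnS => /orP[/eqP->//|nm] /deriv_bound_pred; exact: IH.
Qed.

Lemma deriv_bound_derive1n K m e f i : (i <= m)%N -> deriv_bound K m e f ->
  `|derive1n i f 0| <= K * dl ^ (e - i%:Z).
Proof.
elim: i m e f => [|i IH] m e f; first by move=> _ /deriv_bound_at0; rewrite subr0.
case: m => [//|m]; rewrite ltnS => im [_ [_ bf']].
rewrite derive1nSr; have := IH _ _ _ im bf'.
by have -> : e - 1 - i%:Z = e - i.+1%:Z by lia.
Qed.

Lemma deriv_bound_derivable K m e f : deriv_bound K m e f -> forall i, (i < m)%N ->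
  \forall t \near (0 : R), derivable (derive1n i f) t 1.
Proof.
move=> + i; elim: i m e f => [|i IH] [|m] e f //; first by move=> [_ []].
move=> [_ [_ bf']]; rewrite ltnS derive1nSr; exact: IH bf'.
Qed.

Lemma deriv_boundD K1 K2 m e f g : deriv_bound K1 m e f -> deriv_bound K2 m e g ->
  deriv_bound (K1 + K2) m e (fun t => f t + g t).
Proof.
elim: m e f g => [|m IH] e f g /=.
  by move=> f0 g0; rewrite mulrDl (le_trans (ler_normD _ _)) ?lerD.
move=> [f0 [df bf']] [g0 [dg bg']]; split.
  by rewrite mulrDl (le_trans (ler_normD _ _)) ?lerD.
split; first by apply: filterS2 df dg => t dft dgt; exact: (derivableD dft dgt).
apply: deriv_bound_near (IH _ _ _ bf' bg').
by apply: filterS2 df dg => t dft dgt; rewrite !derive1E -(deriveD dft dgt).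
Qed.

Lemma deriv_boundZ K c m e f : deriv_bound K m e f ->
  deriv_bound (`|c| * K) m e (fun t => c * f t).
Proof.
elim: m e f => [|m IH] e f /=; first by move=> f0; rewrite normrM -mulrA ler_wpM2l.
move=> [f0 [df bf']]; split; first by rewrite normrM -mulrA ler_wpM2l.
split; first by apply: filterS df => t dft; have := derivableM (derivable_cst c t 1) dft.
apply: deriv_bound_near (IH _ _ bf').
by apply: filterS df => t dft; rewrite !derive1E deriveZ.
Qed.

Lemma deriv_bound0 K m e : 0 <= K -> deriv_bound K m e (fun=> 0).
Proof.
move=> K0; have zero_le e' : `|0 : R| <= K * dl ^ e'.
  by rewrite normr0 mulr_ge0 // ltW ?exprz_gt0.
elim: m e => [|m IH] e /=; first exact: zero_le.
split; first exact: zero_le.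
split; first by near=> t; exact: derivable_cst.
apply: deriv_bound_near (IH (e - 1)).
by near=> t; rewrite derive1E derive_cst.
Unshelve. all: by end_near. Qed.

Lemma deriv_boundM K1 K2 m a b f g : deriv_bound K1 m a f -> deriv_bound K2 m b g ->
  deriv_bound (2 ^+ m * (K1 * K2)) m (a + b) (fun t => f t * g t).
Proof.
elim: m a b f g => [|m IH] a b f g /=.
  move=> f0 g0; rewrite expr0 mul1r expfzDr ?gt_eqF // normrM mulrACA.
  by apply: ler_pM => //; exact: deriv_bound_ge0 f0.
move=> [f0 [df bf']] [g0 [dg bg']].
have K1_ge0 := deriv_bound_ge0 (m := 0) f0; have K2_ge0 := deriv_bound_ge0 (m := 0) g0.
have bf : deriv_bound K1 m a f := deriv_bound_pred (m := m) (conj f0 (conj df bf')).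
have bg : deriv_bound K2 m b g := deriv_bound_pred (m := m) (conj g0 (conj dg bg')).
split.
  rewrite expfzDr ?gt_eqF // normrM (le_trans (ler_pM _ _ f0 g0)) //.
  rewrite mulrACA; apply: ler_wpM2r; first by rewrite mulr_ge0 // ltW ?exprz_gt0.
  by rewrite ler_peMl ?mulr_ge0 // exprn_ege1 // ler1n.
split; first by apply: filterS2 df dg => t dft dgt; have := derivableM dft dgt.
have H1 := IH _ _ _ _ bf' bg; have H2 := IH _ _ _ _ bf bg'.
rewrite addrAC in H1; rewrite addrA in H2.
have -> : 2 ^+ m.+1 * (K1 * K2) = 2 ^+ m * (K1 * K2) + 2 ^+ m * (K1 * K2).
  by rewrite exprS; ring.
apply: deriv_bound_near (deriv_boundD H1 H2).
apply: filterS2 df dg => t dft dgt; rewrite !derive1E.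
have := deriveM dft dgt; rewrite /= => ->.
by rewrite /GRing.scale /= addrC mulrC [g t * _]mulrC.
Qed.

Fixpoint inv_const (c A : R) (m : nat) : R :=
  if m is m'.+1 then c^-1 + 2 ^+ m' * (A * (2 ^+ m' * (inv_const c A m' * inv_const c A m')))
  else c^-1.

Lemma inv_const_ge0 c A m : 0 <= c -> 0 <= A -> 0 <= inv_const c A m.
Proof.
move=> c0 A0; elim: m => [|m IH] /=; first by rewrite invr_ge0.
by rewrite addr_ge0 ?invr_ge0 // !mulr_ge0 // exprn_ge0.
Qed.

(* Induction on [m] through [(1/v)' = - v' (1/v)^2]. *)
Lemma deriv_boundV c A m (v : R -> R) : 0 < c -> c * dl ^+ 2 <= `|v 0| ->
  (\forall t \near (0 : R), derivable v t 1) -> deriv_bound A m.-1 1 (derive1 v) ->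
  deriv_bound (inv_const c A m) m (-2) (fun t => (v t)^-1).
Proof.
move=> c0 v0_ge dv.
have v0 : v 0 != 0.
  by rewrite -normr_gt0 (lt_le_trans _ v0_ge) // mulr_gt0 // exprn_gt0.
have inv_v0 : `|(v 0)^-1| <= c^-1 * dl ^ (-2).
  rewrite normfV -invr_expz -exprnP -invfM lef_pV2 ?posrE ?normr_gt0 //.
  by rewrite mulr_gt0 // exprn_gt0.
have v_neq0 : \forall t \near (0 : R), v t != 0.
  have cv : {for 0, continuous v}.
    exact/differentiable_continuous/derivable1_diffP/(nbhs_singleton dv).
  exact: cvgr_neq0 cv v0.
elim: m => [|m IH] bv' /=; first exact: inv_v0.
have A0 := deriv_bound_ge0 bv'.
split.
  apply: le_trans inv_v0 _; apply: ler_wpM2r; first by rewrite ltW ?exprz_gt0.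
  by rewrite lerDl !mulr_ge0 // ?exprn_ge0 // inv_const_ge0 // ltW.
split; first by apply: filterS2 dv v_neq0 => t dvt vt0; exact: derivableV.
have bw := IH (deriv_bound_leq (leq_pred m) bv').
have := deriv_boundZ (-1) (deriv_boundM bv' (deriv_boundM bw bw)).
rewrite normrN1 mul1r (_ : 1 + (-2 + -2) = -2 - 1) // => bw'.
apply: deriv_bound_near (deriv_bound_le _ bw'); last by rewrite lerDr invr_ge0 ltW.
apply: filterS2 dv v_neq0 => t dvt vt0.
rewrite !derive1E deriveV //= /GRing.scale /=.
by rewrite mulN1r expr2 invfM mulNr mulrC.
Qed.

Lemma deriv_bound_of_derivs K m e (F : nat -> R -> R) :
  (forall n, (n < m)%N -> forall t : R, is_derive t 1 (F n) (F n.+1 t)) ->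
  (forall n, (n <= m)%N -> `|F n 0| <= K * dl ^ (e - n%:Z)) -> deriv_bound K m e (F 0%N).
Proof.
elim: m e F => [|m IH] e F dF bF; first by have := bF 0%N (leqnn 0); rewrite subr0.
split; first by have := bF 0%N (leq0n _); rewrite subr0.
split; first by near=> t; have [] := dF 0%N (ltn0Sn _) t.
have -> : derive1 (F 0%N) = F 1%N.
  by apply: funext => t; have := dF 0%N (ltn0Sn _) t; rewrite derive1E => h; rewrite derive_val.
apply: (IH _ (fun n => F n.+1)) => [n nm t|n nm]; first exact: dF.
by have := bF n.+1 nm; rewrite (_ : e - n.+1%:Z = e - 1 - n%:Z) //; lia.
Unshelve. all: by end_near. Qed.

Variable D : R.
Hypotheses (dl_le_D : dl <= D) (D_ge1 : 1 <= D).

Lemma deriv_bound_lower K m e f : deriv_bound K m e f -> deriv_bound (K * D) m (e - 1) f.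
Proof.
have dl_lower e' : dl ^ e' <= D * dl ^ (e' - 1).
  have -> : dl ^ e' = dl * dl ^ (e' - 1).
    by rewrite -[in RHS](expr1z dl) -expfzDr ?gt_eqF // addrC subrK.
  by rewrite ler_wpM2r // ltW ?exprz_gt0.
have lower0 e' (h : R -> R) : `|h 0| <= K * dl ^ e' -> `|h 0| <= K * D * dl ^ (e' - 1).
  move=> h0; rewrite -mulrA (le_trans h0) //; apply: ler_wpM2l => //.
  exact: (deriv_bound_ge0 (m := 0) h0).
elim: m e f => [|m IH] e f /=; first exact: lower0.
by move=> [f0 [df bf']]; split; [exact: lower0 | split => //; exact: IH].
Qed.

(* The profile of [t |-> h (k + t e_j)] for a smooth even [h]: bounded, with first
   derivative [O(dl)] since the gradient of [h] vanishes at 0. *)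
Definition even_bound K m (f : R -> R) :=
  `|f 0| <= K /\ (\forall t \near (0 : R), derivable f t 1) /\ deriv_bound K m.-1 1 (derive1 f).

Lemma even_bound_deriv_bound K m f : even_bound K m f -> deriv_bound (K * (D * D)) m 0 f.
Proof.
move=> [f0 [df bf']]; have K0 := deriv_bound_ge0 bf'.
have f0' : `|f 0| <= K * (D * D) * dl ^ 0.
  by rewrite expr0z mulr1 (le_trans f0) // ler_peMr // mulr_ege1.
case: m bf' => [|m] bf' //=; split => //; split => //.
by rewrite mulrA; have := deriv_bound_lower (deriv_bound_lower bf').
Qed.

Lemma even_boundD K1 K2 m f g : even_bound K1 m f -> even_bound K2 m g ->
  even_bound (K1 + K2) m (fun t => f t + g t).
Proof.
move=> [f0 [df bf']] [g0 [dg bg']]; split; first by rewrite (le_trans (ler_normD _ _)) ?lerD.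
split; first by apply: filterS2 df dg => t dft dgt; exact: (derivableD dft dgt).
apply: deriv_bound_near (deriv_boundD bf' bg').
by apply: filterS2 df dg => t dft dgt; rewrite !derive1E -(deriveD dft dgt).
Qed.

Lemma even_boundZ K c m f : even_bound K m f -> even_bound (`|c| * K) m (fun t => c * f t).
Proof.
move=> [f0 [df bf']]; split; first by rewrite normrM ler_wpM2l.
split; first by apply: filterS df => t dft; have := derivableM (derivable_cst c t 1) dft.
apply: deriv_bound_near (deriv_boundZ c bf').
by apply: filterS df => t dft; rewrite !derive1E deriveZ.
Qed.

Lemma even_bound_cst K m c : `|c| <= K -> even_bound K m (fun=> c).
Proof.
move=> cK; split => //; split; first by near=> t; exact: derivable_cst.
apply: deriv_bound_near (deriv_bound0 _ _ (le_trans (normr_ge0 _) cK)).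
by near=> t; rewrite derive1E derive_cst.
Unshelve. all: by end_near. Qed.

Definition even_mul_const m K1 K2 :=
  K1 * K2 + 2 ^+ m.-1 * (K1 * (K2 * (D * D))) + 2 ^+ m.-1 * (K1 * (D * D) * K2).

Lemma even_boundM K1 K2 m f g : even_bound K1 m f -> even_bound K2 m g ->
  even_bound (even_mul_const m K1 K2) m (fun t => f t * g t).
Proof.
move=> bf bg.
have bf1 := deriv_bound_leq (leq_pred m) (even_bound_deriv_bound bf).
have bg1 := deriv_bound_leq (leq_pred m) (even_bound_deriv_bound bg).
case: bf bg => [f0 [df bf']] [g0 [dg bg']].
have K1_ge0 := deriv_bound_ge0 bf'; have K2_ge0 := deriv_bound_ge0 bg'.
have D_ge0 : 0 <= D := le_trans ler01 D_ge1.
have := deriv_boundD (deriv_boundM bf' bg1) (deriv_boundM bf1 bg').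
rewrite ?addr0 ?add0r => bfg'.
split.
  rewrite normrM (le_trans (ler_pM _ _ f0 g0)) // /even_mul_const -addrA lerDl.
  by rewrite addr_ge0 // !mulr_ge0 // exprn_ge0.
split; first by apply: filterS2 df dg => t dft dgt; have := derivableM dft dgt.
apply: deriv_bound_near (deriv_bound_le _ bfg'); last first.
  by rewrite /even_mul_const -addrA lerDr !mulr_ge0.
apply: filterS2 df dg => t dft dgt; rewrite !derive1E.
have := deriveM dft dgt; rewrite /= => ->.
by rewrite /GRing.scale /= addrC mulrC [g t * _]mulrC.
Qed.

Lemma even_bound_of_derivs S m (F : nat -> R -> R) : (0 < m)%N ->
  (forall n, (n < m)%N -> forall t : R, is_derive t 1 (F n) (F n.+1 t)) ->
  `|F 0%N 0| <= S -> `|F 1%N 0| <= S * dl ->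
  (forall n, (2 <= n <= m)%N -> `|F n 0| <= S) -> even_bound (S * D ^+ m) m (F 0%N).
Proof.
move=> m_gt0 dF F0 F1 Fn.
have S0 : 0 <= S := le_trans (normr_ge0 _) F0.
have Dm_ge1 : 1 <= D ^+ m by exact: exprn_ege1.
have dl_inv_le i : (i <= m)%N -> 1 <= D ^+ m * dl ^ (- i%:Z).
  move=> im; rewrite -exprnN ler_pdivlMr ?exprn_gt0 // mul1r.
  apply: le_trans (_ : D ^+ i <= _); last exact: ler_weXn2l.
  by apply: lerXn2r; rewrite // nnegrE ltW // (lt_le_trans dl_gt0).
split; first by rewrite (le_trans F0) // ler_peMr.
split; first by near=> t; have [] := dF 0%N m_gt0 t.
have -> : derive1 (F 0%N) = F 1%N.
  by apply: funext => t; have := dF 0%N m_gt0 t; rewrite derive1E => h; rewrite derive_val.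
apply: (deriv_bound_of_derivs (F := fun n => F n.+1)) => [n nm t|[|n] nm].
- by apply: dF; rewrite -ltnS prednK in nm.
- by rewrite subr0 expr1z (le_trans F1) // -mulrA ler_wpM2l // ler_peMl // ltW.
have nm' : (n.+2 <= m)%N by rewrite -ltnS prednK in nm.
rewrite (_ : 1 - n.+1%:Z = - n%:Z); last by lia.
rewrite (le_trans (Fn n.+2 _)) ?nm' // -mulrA ler_peMr // dl_inv_le //.
exact: leq_trans (leqnSn _) (ltnW nm').
Unshelve. all: by end_near. Qed.

Lemma deriv_bound_div Ku Kv c m (u v : R -> R) : 0 < c ->
  even_bound Ku m u -> even_bound Kv m v -> c * dl ^+ 2 <= `|v 0| ->
  deriv_bound (2 ^+ m * (Ku * (D * D) * inv_const c Kv m)) m (-2) (fun t => u t / v t).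
Proof.
move=> c0 bu [v0 [dv bv']] v0_ge.
by have := deriv_boundM (even_bound_deriv_bound bu) (deriv_boundV c0 v0_ge dv bv').
Qed.

Lemma even_bound_lace QD QP a b l u m (hD hP : R -> R) :
  even_bound QD m hD -> even_bound QP m hP ->
  even_bound (`|b| + `|l| * QP) m (fun t => b + l * hP t) /\
  even_bound (1 + (even_mul_const m (`|a| * QD) (`|b| + `|l| * QP) + `|u| * QP)) m
    (fun t => 1 - (a * hD t * (b + l * hP t) + u * hP t)).
Proof.
move=> bD bP; have bg := even_boundD (even_bound_cst m (lexx `|b|)) (even_boundZ l bP).
split => //.
have bJ := even_boundD (even_boundM (even_boundZ a bD) bg) (even_boundZ u bP).
have := even_boundD (even_bound_cst m (lexx `|1 : R|)) (even_boundZ (-1) bJ).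
by rewrite normrN1 mul1r normr1; under eq_fun do rewrite mulN1r.
Qed.

End DerivBound.

Section RealCalculus.
Variable R : realType.

Lemma dist_le_of_derive_le1 (f df : R -> R) (u v : R) :
  (forall x : R, is_derive x 1 f (df x)) -> (forall x, `|df x| <= 1) -> continuous f ->
  `|f u - f v| <= `|u - v|.
Proof.
move=> dfx df_le1 cf; wlog vu : u v / v <= u.
  by move=> W; case: (leP v u) => [|/ltW uv]; [exact: W | rewrite distrC (distrC u); exact: W].
have [c _ ->] := MVT_segment vu (fun x _ => dfx x) (continuous_subspaceT cf).
by rewrite normrM ler_piMl.
Qed.

Lemma ler_dist_cos (u v : R) : `|cos u - cos v| <= `|u - v|.
Proof.
apply: (@dist_le_of_derive_le1 cos (fun x => - sin x)) => [x|]; last exact: continuous_cos.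
by rewrite normrN sin_max.
Qed.

Lemma ler_norm_sin (u : R) : `|sin u| <= `|u|.
Proof.
have := @dist_le_of_derive_le1 sin cos u 0 (@is_derive_sin R) (@cos_max R) (@continuous_sin R).
by rewrite sin0 !subr0.
Qed.

Lemma is_derive_comp (f g : R -> R) (t df dg : R) : is_derive t 1 f df ->
  is_derive (f t) 1 g dg -> is_derive t 1 (g \o f) (dg * df).
Proof.
move=> dft dgft; apply: DeriveDef.
  by apply/derivable1_diffP; apply: differentiable_comp; apply/derivable1_diffP.
by rewrite -derive1E derive1_comp // !derive1E !derive_val.
Qed.

Lemma is_derive_affine (t b c : R) : is_derive t 1 (fun s => s * b + c) b.
Proof.
have -> : (fun s => s * b + c) = id * cst b + cst c by [].
apply: is_derive_eq (is_deriveD (is_deriveM (is_derive_id t 1) (is_derive_cst b t 1))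
  (is_derive_cst c t 1)) _.
by rewrite /GRing.scale /= mulr0 mulr1 add0r addr0.
Qed.

Lemma is_derive_of_approx (f : R -> R) (L t0 : R) (fN : nat -> R -> R) (fN' e : nat -> R) :
  e @ \oo --> 0 -> (forall N, is_derive t0 1 (fN N) (fN' N)) ->
  (forall N s, `|(f s - f t0 - (s - t0) * L) - (fN N s - fN N t0 - (s - t0) * fN' N)|
     <= e N * `|s - t0|) ->
  is_derive t0 1 f L.
Proof.
move=> e0 dfN approx.
suff qf : (fun h : R => h^-1 *: ((f \o shift t0) (h *: 1) - f t0)) @ 0^' --> L.
  by apply: DeriveDef; [apply/cvg_ex; exists L | exact: cvg_lim qf].
apply/cvgrPdist_le => eps eps0.
have eps2 : 0 < eps / 2 by rewrite divr_gt0.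
have [N _ eN] := (cvgrPdist_le _ _).1 e0 _ eps2.
have eN_le : `|e N| <= eps / 2 by have := eN N (leqnn N); rewrite sub0r normrN.
have qN : (fun h : R => h^-1 *: ((fN N \o shift t0) (h *: 1) - fN N t0)) @ 0^' --> fN' N.
  by have [dN <-] := dfN N; exact: dN.
have qN_near := (cvgrPdist_le _ _).1 qN _ eps2.
near=> h.
have h0 : h != 0 by near: h; exact: nbhs_dnbhs_neq.
have qNh : `|fN' N - (fun h : R => h^-1 *: ((fN N \o shift t0) (h *: 1) - fN N t0)) h|
    <= eps / 2 by near: h; exact: qN_near.
rewrite /= /GRing.scale /= mulr1 in qNh *.
have := approx N (h + t0); rewrite addrK.
set A := fN N (h + t0) - fN N t0; set B := f (h + t0) - f t0 => hAB.
have -> : L - h^-1 * B = (fN' N - h^-1 * A) - h^-1 * ((B - h * L) - (A - h * fN' N)).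
  by field.
rewrite (splitr eps) (le_trans (ler_normB _ _)) // lerD // normrM normfV.
rewrite ler_pdivrMl ?normr_gt0 // (le_trans hAB) // mulrC ler_wpM2l //.
exact: le_trans (ler_norm _) eN_le.
Unshelve. all: by end_near. Qed.

End RealCalculus.

Section BoxSums.
Variables (R : realType) (d : nat).
Implicit Types (F G : zpt d -> R).

Definition box_embed N N' (y : {ffun 'I_d -> 'I_(N.*2.+1)}) : {ffun 'I_d -> 'I_(N'.*2.+1)} :=
  [ffun i => inord (y i + (N' - N))].

Lemma box_embed_val N N' (y : {ffun 'I_d -> 'I_(N.*2.+1)}) i : (N <= N')%N ->
  (box_embed N' y i : nat) = (y i + (N' - N))%N.
Proof.
move=> NN'; rewrite ffunE inordK //; have := ltn_ord (y i).
by move: (nat_of_ord (y i)) => a; rewrite -!muln2; lia.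
Qed.

Lemma boxpt_embed N N' (y : {ffun 'I_d -> 'I_(N.*2.+1)}) : (N <= N')%N ->
  boxpt (@box_embed N N' y) = boxpt y.
Proof. by move=> NN'; apply: funext => i; rewrite /boxpt box_embed_val //; lia. Qed.

Lemma box_embed_inj N N' : (N <= N')%N -> injective (@box_embed N N').
Proof.
move=> NN' y1 y2 E; apply/ffunP => i; apply/val_inj.
have := congr1 (fun y : {ffun 'I_d -> 'I_(N'.*2.+1)} => nat_of_ord (y i)) E.
by rewrite /= !box_embed_val //; lia.
Qed.

Lemma boxsum_split N N' F : (N <= N')%N ->
  boxsum N' F = boxsum N F +
    \sum_(y | y \notin @box_embed N N' @: setT) F (boxpt y).
Proof.
move=> NN'; rewrite /boxsum (bigID (mem (@box_embed N N' @: setT))) /=; congr (_ + _).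
rewrite big_imset /=; last by move=> x y _ _; exact: box_embed_inj.
by apply: eq_big => [y|y _]; [rewrite in_setT | rewrite boxpt_embed].
Qed.

Lemma boxsumD N F G : boxsum N (fun x => F x + G x) = boxsum N F + boxsum N G.
Proof. exact: big_split. Qed.

Lemma boxsumZ N c F : boxsum N (fun x => c * F x) = c * boxsum N F.
Proof. by rewrite /boxsum mulr_sumr. Qed.

Lemma boxsumB N F G : boxsum N (fun x => F x - G x) = boxsum N F - boxsum N G.
Proof. by rewrite /boxsum -sumrB. Qed.

Lemma ler_boxsum_dist F G N N' : (N <= N')%N -> (forall x, `|F x| <= G x) ->
  `|boxsum N' F - boxsum N F| <= boxsum N' G - boxsum N G.
Proof.
move=> NN' FG; rewrite !(boxsum_split _ NN') ![boxsum N _ + _]addrC !addrK.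
by rewrite (le_trans (ler_norm_sum _ _ _)) // ler_sum.
Qed.

Lemma boxsum_mono G : (forall x, 0 <= G x) -> nondecreasing_seq (fun N => boxsum N G).
Proof. by move=> G0 N N' NN'; rewrite (boxsum_split _ NN') lerDl sumr_ge0. Qed.

Definition box_summable G := exists B, forall N, boxsum N G <= B.

Lemma boxsum_cvg G : (forall x, 0 <= G x) -> box_summable G -> cvgn (fun N => boxsum N G).
Proof.
move=> G0 [B GB]; apply: nondecreasing_is_cvgn; first exact: boxsum_mono.
by exists B => _ [N _ <-].
Qed.

Lemma boxsum_le_lim G N : (forall x, 0 <= G x) -> box_summable G ->
  boxsum N G <= limn (fun N => boxsum N G).
Proof.
by move=> G0 SG; apply: nondecreasing_cvgn_le; [exact: boxsum_mono | exact: boxsum_cvg].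
Qed.

Lemma boxsum_dom_cvg F G : (forall x, `|F x| <= G x) -> box_summable G ->
  cvgn (fun N => boxsum N F).
Proof.
move=> FG [B GB]; have G0 x : 0 <= G x := le_trans (normr_ge0 _) (FG x).
have -> : (fun N => boxsum N F) =
    (fun N => boxsum N (fun x => G x + F x)) - (fun N => boxsum N G).
  apply: funext => N; transitivity (boxsum N (fun x => G x + F x) - boxsum N G) => //.
  by rewrite boxsumD addrAC subrr add0r.
apply: is_cvgB; last by apply: boxsum_cvg => //; exists B.
apply: boxsum_cvg => [x|].
  by have := FG x; rewrite ler_norml => /andP[FGx _]; lra.
exists (B + B) => N; rewrite (boxsumD N G F) lerD //.
apply: le_trans (GB N); apply: le_trans (ler_norm _) _.
by apply: le_trans (ler_norm_sum _ _ _) _; apply: ler_sum => y _.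
Qed.

Lemma boxsum_dom_tail F G N : (forall x, `|F x| <= G x) -> box_summable G ->
  `|limn (fun N => boxsum N F) - boxsum N F| <= limn (fun N => boxsum N G) - boxsum N G.
Proof.
move=> FG SG; have G0 x : 0 <= G x := le_trans (normr_ge0 _) (FG x).
have cF := boxsum_dom_cvg FG SG.
set T := limn (fun N => boxsum N G) - boxsum N G.
have FT N' : (N <= N')%N -> `|boxsum N' F - boxsum N F| <= T.
  by move=> NN'; rewrite (le_trans (ler_boxsum_dist NN' FG)) // lerB // boxsum_le_lim.
rewrite ler_norml; apply/andP; split.
  suff : boxsum N F - T <= limn (fun N => boxsum N F) by lra.
  apply: limr_ge => //; exists N => // N' /= /FT; rewrite ler_norml => /andP[? _]; lra.
suff : limn (fun N => boxsum N F) <= boxsum N F + T by lra.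
apply: limr_le => //; exists N => // N' /= /FT; rewrite ler_norml => /andP[_ ?]; lra.
Qed.

Lemma boxsum_dom_tailZ F G c N : 0 <= c -> (forall x, `|F x| <= c * G x) ->
  (forall x, 0 <= G x) -> box_summable G ->
  `|limn (fun N => boxsum N F) - boxsum N F| <= c * (limn (fun N => boxsum N G) - boxsum N G).
Proof.
move=> c0 FG G0 [B GB].
have SG' : box_summable (fun x => c * G x) by exists (c * B) => N'; rewrite boxsumZ ler_wpM2l.
have := boxsum_dom_tail N FG SG'.
have -> : (fun N => boxsum N (fun x => c * G x)) = (fun N => c * boxsum N G).
  by apply: funext => N'; rewrite boxsumZ.
have -> : limn (fun N => c * boxsum N G) = c * limn (fun N => boxsum N G).
  by apply: cvg_lim => //; apply: cvgMl_tmp; apply: boxsum_cvg => //; exists B.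
by rewrite boxsumZ mulrBr.
Qed.

Lemma boxsum_tail_cvg0 G : (forall x, 0 <= G x) -> box_summable G ->
  (fun N => limn (fun N => boxsum N G) - boxsum N G) @ \oo --> 0.
Proof.
move=> G0 SG; rewrite -(subrr (limn (fun N => boxsum N G))).
exact: cvgB (cvg_cst _) (boxsum_cvg G0 SG).
Qed.

Lemma boxsum_dom_lim_bound F G B : (forall x, `|F x| <= G x) ->
  (forall N, boxsum N G <= B) -> `|limn (fun N => boxsum N F)| <= B.
Proof.
move=> FG GB; have cF := boxsum_dom_cvg FG (ex_intro _ B GB).
have FB N : `|boxsum N F| <= B.
  by rewrite (le_trans _ (GB N)) // (le_trans (ler_norm_sum _ _ _)) // ler_sum.
rewrite ler_norml; apply/andP; split.
  by apply: limr_ge => //; apply: nearW => N; have := FB N; rewrite ler_norml => /andP[].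
by apply: limr_le => //; apply: nearW => N; have := FB N; rewrite ler_norml => /andP[].
Qed.

End BoxSums.

Section Norms.
Variables (R : realType) (d : nat).

Lemma ler_sqrt_sum_coord (a : 'I_d -> R) i : `|a i| <= Num.sqrt (\sum_l a l ^+ 2).
Proof.
rewrite -sqrtr_sqr ler_sqrt ?sumr_ge0 // => [|l _]; last exact: sqr_ge0.
by rewrite (bigD1 i) //= lerDl sumr_ge0 // => l _; exact: sqr_ge0.
Qed.

Lemma ler_coord_rnorm (k : 'I_d -> R) i : `|k i| <= rnorm k.
Proof. exact: ler_sqrt_sum_coord. Qed.

Lemma ler_coord_znorm (x : zpt d) i : `|(x i)%:~R| <= znorm R x.
Proof. exact: (ler_sqrt_sum_coord (fun l => (x l)%:~R)). Qed.

Lemma znorm_ge0 (x : zpt d) : 0 <= znorm R x.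
Proof. exact: sqrtr_ge0. Qed.

Lemma rnorm_ge0 (k : 'I_d -> R) : 0 <= rnorm k.
Proof. exact: sqrtr_ge0. Qed.

Lemma znorm_ge1 (x : zpt d) i : x i != 0 -> 1 <= znorm R x.
Proof.
move=> xi0; rewrite (le_trans _ (ler_coord_znorm x i)) //.
by rewrite -intr_norm ler1z; lia.
Qed.

Lemma ler_norm_dotkx (k : 'I_d -> R) (x : zpt d) :
  `|dotkx k x| <= d%:R * (rnorm k * znorm R x).
Proof.
have -> : d%:R * (rnorm k * znorm R x) = \sum_(i < d) rnorm k * znorm R x.
  by rewrite sumr_const card_ord mulr_natl.
rewrite (le_trans (ler_norm_sum _ _ _)) // ler_sum // => i _.
by rewrite normrM ler_pM ?ler_coord_rnorm ?ler_coord_znorm.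
Qed.

End Norms.
Arguments znorm_ge0 {R d}.
Arguments znorm_ge1 {R d}.
Arguments ler_coord_znorm {R d}.

Definition zpt0 {d : nat} : zpt d := fun=> 0.

Section FourierAlongLine.
Variables (R : realType) (d : nat) (Pi : zpt d -> R) (k : 'I_d -> R) (j : 'I_d).

Let xj (x : zpt d) : R := (x j)%:~R.

(* [d^n/dt^n (Pi x * cos (k.x + t x_j))], written with [cos^(n) y = cos (y + n pi/2)]. *)
Definition cos_term (n : nat) (t : R) (x : zpt d) : R :=
  Pi x * xj x ^+ n * cos (t * xj x + (dotkx k x + n%:R * (pi / 2))).

Definition hatPi_deriv n t := limn (fun N => boxsum N (cos_term n t)).

Definition moment_weight n (x : zpt d) : R := znorm R x ^+ n * `|Pi x|.

Lemma moment_weight_ge0 n x : 0 <= moment_weight n x.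
Proof. by rewrite mulr_ge0 // exprn_ge0 // znorm_ge0. Qed.

Lemma norm_cos_term_le n t x : `|cos_term n t x| <= moment_weight n x.
Proof.
rewrite /cos_term /moment_weight !normrM [_ * `|Pi x|]mulrC -mulrA ler_wpM2l //.
rewrite -[X in _ <= X]mulr1 ler_pM ?cos_max // normrX.
by rewrite lerXn2r ?nnegrE ?znorm_ge0 // ler_coord_znorm.
Qed.

Lemma dist_cos_term_le n s t x :
  `|cos_term n s x - cos_term n t x| <= `|s - t| * moment_weight n.+1 x.
Proof.
rewrite /cos_term -mulrBr normrM /moment_weight exprS.
have xj_le : `|xj x| <= znorm R x := ler_coord_znorm x j.
have cos_le : `|cos (s * xj x + (dotkx k x + n%:R * (pi / 2)))
                - cos (t * xj x + (dotkx k x + n%:R * (pi / 2)))| <= `|s - t| * `|xj x|.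
  by rewrite -normrM (le_trans (ler_dist_cos _ _)) // (_ : _ - _ = (s - t) * xj x) //; ring.
rewrite (le_trans (ler_wpM2l (normr_ge0 _) cos_le)) // normrM normrX.
rewrite [leLHS](_ : _ = `|s - t| * (`|xj x| * `|xj x| ^+ n * `|Pi x|)); last by ring.
rewrite ler_wpM2l // ler_wpM2r // ler_pM ?exprn_ge0 //.
by rewrite lerXn2r ?nnegrE ?znorm_ge0.
Qed.

Lemma is_derive_cos_term n (t : R) x : is_derive t 1 (cos_term n ^~ x) (cos_term n.+1 t x).
Proof.
set C := Pi x * xj x ^+ n; set c := dotkx k x + n%:R * (pi / 2).
have -> : cos_term n ^~ x = cst C * (cos \o (fun s => s * xj x + c)) by [].
apply: is_derive_eq (is_deriveM (is_derive_cst C t 1)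
  (is_derive_comp (is_derive_affine t (xj x) c) (is_derive_cos _))) _.
rewrite /GRing.scale /= mulr0 addr0 /cos_term exprS.
have -> : t * xj x + (dotkx k x + n.+1%:R * (pi / 2)) = t * xj x + c + pi / 2.
  by rewrite /c -natr1; ring.
by rewrite cosDpihalf /C; ring.
Qed.

Lemma is_derive_boxsum_cos_term n N (t : R) :
  is_derive t 1 (fun s => boxsum N (cos_term n s)) (boxsum N (cos_term n.+1 t)).
Proof.
rewrite /boxsum -fct_sumE.
elim/big_ind2 : _ => // [|f1 df1 f2 df2 h1 h2|y _]; [exact: is_derive_cst | exact: is_deriveD |].
exact: is_derive_cos_term.
Qed.

Variables (M : nat) (BM : R).
Hypothesis moment_M : forall N, boxsum N (moment_weight M) <= BM.

(* Off the origin [|x| >= 1], so the lower moments are dominated by the [M]-th one. *)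
Lemma moment_weight_le n x : (n <= M)%N ->
  moment_weight n x <= moment_weight M x + (if [forall i, x i == 0] then `|Pi x| else 0).
Proof.
rewrite /moment_weight => nM; case: ifP => [/forallP x0|/negbT].
  have -> : znorm R x = 0 by rewrite /znorm big1 ?sqrtr0 // => i _; rewrite (eqP (x0 i)) expr0n.
  rewrite expr0n; apply: (@le_trans _ _ `|Pi x|).
    by case: (n == 0)%N; rewrite ?mul1r ?mul0r.
  by rewrite lerDr mulr_ge0 // exprn_ge0.
rewrite negb_forall => /existsP [i xi0]; rewrite addr0 ler_wpM2r //.
by rewrite ler_weXn2l // (znorm_ge1 _ _ xi0).
Qed.

Lemma boxsum_at_origin N :
  boxsum N (fun x : zpt d => if [forall i, x i == 0] then `|Pi x| else 0) = `|Pi zpt0|.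
Proof.
pose y0 : {ffun 'I_d -> 'I_(N.*2.+1)} := [ffun => inord N].
have y0E i : (y0 i : nat) = N by rewrite ffunE inordK // ltnS -addnn leq_addr.
have boxpt_y0 : boxpt y0 = zpt0 by apply: funext => i; rewrite /boxpt /zpt0 y0E subrr.
rewrite /boxsum -big_mkcond /= (big_pred1 y0) ?boxpt_y0 // => y /=.
apply/forallP/eqP => [y_0|->]; last by move=> i; rewrite boxpt_y0.
apply/ffunP => i; apply/val_inj; rewrite /= y0E.
by have := y_0 i; rewrite /boxpt => /eqP; lia.
Qed.

Lemma boxsum_moment_weight_le n N : (n <= M)%N ->
  boxsum N (moment_weight n) <= BM + `|Pi zpt0|.
Proof.
move=> nM; apply: le_trans (_ : boxsum N (fun x => moment_weight M x +
  (if [forall i, x i == 0] then `|Pi x| else 0)) <= _).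
  by apply: ler_sum => y _; exact: moment_weight_le.
by rewrite boxsumD boxsum_at_origin lerD2r.
Qed.

Lemma moment_weight_summable n : (n <= M)%N -> box_summable (moment_weight n).
Proof. by move=> nM; exists (BM + `|Pi zpt0|) => N; exact: boxsum_moment_weight_le. Qed.

Lemma norm_hatPi_deriv_le n t : (n <= M)%N -> `|hatPi_deriv n t| <= BM + `|Pi zpt0|.
Proof.
move=> nM; apply: (boxsum_dom_lim_bound (G := moment_weight n)) => [x|N].
  exact: norm_cos_term_le.
exact: boxsum_moment_weight_le.
Qed.

(* Termwise differentiation: the tails of the moment series of order [n+1]
   control both the difference quotients and the derivatives of the partial sums. *)
Lemma is_derive_hatPi_deriv n (t : R) : (n < M)%N ->
  is_derive t 1 (hatPi_deriv n) (hatPi_deriv n.+1 t).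
Proof.
move=> nM; have SG := moment_weight_summable nM.
have cvg_term s : cvgn (fun N => boxsum N (cos_term n s)).
  exact: boxsum_dom_cvg (norm_cos_term_le n s) (moment_weight_summable (ltnW nM)).
pose T N := limn (fun N => boxsum N (moment_weight n.+1)) - boxsum N (moment_weight n.+1).
apply: (@is_derive_of_approx _ _ _ _ (fun N s => boxsum N (cos_term n s))
  (fun N => boxsum N (cos_term n.+1 t)) (fun N => T N + T N)) => [||N s].
- by rewrite -[0]addr0; apply: cvgD; exact: boxsum_tail_cvg0 (@moment_weight_ge0 _) SG.
- by move=> N; exact: is_derive_boxsum_cos_term.
have diff_lim : hatPi_deriv n s - hatPi_deriv n t =
    limn (fun N => boxsum N (fun x => cos_term n s x - cos_term n t x)).
  apply/esym/cvg_lim => //; under eq_fun do rewrite boxsumB.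
  exact: cvgB (cvg_term s) (cvg_term t).
have tail_diff : `|(hatPi_deriv n s - hatPi_deriv n t)
    - (boxsum N (cos_term n s) - boxsum N (cos_term n t))| <= `|s - t| * T N.
  rewrite diff_lim -boxsumB.
  exact: boxsum_dom_tailZ (normr_ge0 _) (dist_cos_term_le n s t) (@moment_weight_ge0 _) SG.
have tail_deriv : `|hatPi_deriv n.+1 t - boxsum N (cos_term n.+1 t)| <= T N.
  exact: boxsum_dom_tail (norm_cos_term_le n.+1 t) SG.
rewrite [X in `|X| <= _](_ : _ = (hatPi_deriv n s - hatPi_deriv n t
    - (boxsum N (cos_term n s) - boxsum N (cos_term n t)))
    - (s - t) * (hatPi_deriv n.+1 t - boxsum N (cos_term n.+1 t))); last by ring.
rewrite (le_trans (ler_normB _ _)) // normrM mulrDl lerD //; first by rewrite mulrC.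
by rewrite [leRHS]mulrC; apply: ler_wpM2l.
Qed.

Lemma norm_hatPi_deriv1_le B2 : (forall N, boxsum N (moment_weight 2) <= B2) ->
  `|hatPi_deriv 1 0| <= d%:R * rnorm k * B2.
Proof.
move=> moment_2.
apply: (boxsum_dom_lim_bound (G := fun x => d%:R * rnorm k * moment_weight 2 x)) => [x|N].
  rewrite /cos_term expr1 mul0r add0r mul1r cosDpihalf !normrM normrN.
  rewrite [leRHS](_ : _ = `|Pi x| * (znorm R x * (d%:R * (rnorm k * znorm R x)))); last first.
    by rewrite /moment_weight; ring.
  rewrite -mulrA ler_wpM2l // ler_pM ?ler_coord_znorm //.
  exact: le_trans (ler_norm_sin _) (ler_norm_dotkx _ _).
by rewrite boxsumZ ler_wpM2l ?mulr_ge0 ?rnorm_ge0.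
Qed.

Lemma along_hatPi : along (hatPi Pi) k j = hatPi_deriv 0.
Proof.
apply: funext => t; rewrite /along /hatPi /hatPi_deriv.
suff -> : (fun x => Pi x * cos (dotkx (fun i => k i + (if i == j then t else 0)) x))
  = cos_term 0 t by [].
apply: funext => x; rewrite /cos_term expr0 mulr1 mul0r addr0 /dotkx.
under eq_bigr do rewrite mulrDl.
rewrite big_split /= addrC (bigD1 j) //= eqxx big1 ?addr0 // => i /negbTE ->.
by rewrite mul0r.
Qed.

End FourierAlongLine.

Section HatDAlongLine.
Variables (R : realType) (d : nat) (k : 'I_d -> R) (j : 'I_d).
Hypothesis d_gt0 : (0 < d)%N.

Let cos_others : R := \sum_(i | i != j) cos (k i).

Definition hatD_deriv (n : nat) (t : R) : R :=
  d%:R^-1 * ((if n == 0%N then cos_others else 0) + cos (t + (k j + n%:R * (pi / 2)))).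

Lemma along_hatD : along (@hatD R d) k j = hatD_deriv 0.
Proof.
apply: funext => t; rewrite /along /hatD /hatD_deriv /=; congr (_ * _).
rewrite (bigD1 j) //= eqxx mul0r !addr0 addrC [k j + t]addrC; congr (_ + _).
by apply: eq_bigr => i /negbTE ->; rewrite addr0.
Qed.

Lemma is_derive_hatD_deriv n (t : R) : is_derive t 1 (hatD_deriv n) (hatD_deriv n.+1 t).
Proof.
set c := k j + n%:R * (pi / 2); set C : R := if n == 0%N then cos_others else 0.
have -> : hatD_deriv n = cst d%:R^-1 * (cst C + (cos \o (fun s => s * 1 + c))).
  by apply: funext => s; rewrite /hatD_deriv !fctE /= mulr1.
apply: is_derive_eq (is_deriveM (is_derive_cst _ t 1) (is_deriveD (is_derive_cst C t 1)
  (is_derive_comp (is_derive_affine t 1 c) (is_derive_cos _)))) _.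
rewrite /GRing.scale /= mulr0 addr0 add0r /hatD_deriv /= add0r mulr1.
have -> : t + (k j + n.+1%:R * (pi / 2)) = t + c + pi / 2 by rewrite /c -natr1; ring.
by rewrite cosDpihalf mulr1.
Qed.

Lemma norm_hatD_deriv_le n : `|hatD_deriv n 0| <= 2.
Proof.
have d_pos : 0 < d%:R :> R by rewrite ltr0n.
rewrite /hatD_deriv normrM ger0_norm ?invr_ge0 ?ler0n // ler_pdivrMl //.
rewrite (le_trans (ler_normD _ _)) // (_ : d%:R * 2 = d%:R + d%:R); last by ring.
rewrite lerD // ?(le_trans (cos_max _)) ?ler1n //.
case: (n == 0%N); rewrite ?normr0 // (le_trans (ler_norm_sum _ _ _)) //.
rewrite (le_trans (ler_sum _ (fun i _ => cos_max (k i)))) //.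
by rewrite sumr_const ler_nat (leq_trans (max_card _)) // card_ord.
Qed.

Lemma norm_hatD_deriv1_le : `|hatD_deriv 1 0| <= rnorm k.
Proof.
rewrite /hatD_deriv /= add0r mul1r add0r cosDpihalf normrM normrN.
rewrite ger0_norm ?invr_ge0 ?ler0n // -[leRHS]mul1r ler_pM ?invr_ge0 ?ler0n //.
  by rewrite invf_le1 ?ltr0n // ler1n.
exact: le_trans (ler_norm_sin _) (ler_coord_rnorm _ _).
Qed.

End HatDAlongLine.

Section LaceProfiles.
Variables (R : realType) (d : nat) (k : 'I_d -> R) (j : 'I_d) (D : R) (m : nat).
Hypotheses (k_gt0 : 0 < rnorm k) (k_le_D : rnorm k <= D) (D_ge1 : 1 <= D) (m_gt0 : (0 < m)%N).

Lemma even_bound_along_hatD : (0 < d)%N ->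
  even_bound (rnorm k) (2 * D ^+ m) m (along (@hatD R d) k j).
Proof.
move=> d_gt0; rewrite along_hatD; apply: even_bound_of_derivs => //.
- by move=> n _ t; exact: is_derive_hatD_deriv.
- exact: norm_hatD_deriv_le.
- by rewrite (le_trans (norm_hatD_deriv1_le _ _ d_gt0)) // ler_peMl ?rnorm_ge0 ?ler1n.
- by move=> n _; exact: norm_hatD_deriv_le.
Qed.

Lemma even_bound_along_hatPi (Pi : zpt d -> R) (M : nat) (BM B2 : R) : (m <= M)%N ->
  (forall N, boxsum N (moment_weight Pi M) <= BM) ->
  (forall N, boxsum N (moment_weight Pi 2) <= B2) ->
  even_bound (rnorm k) ((BM + `|Pi zpt0| + d%:R * B2) * D ^+ m) m (along (hatPi Pi) k j).
Proof.
move=> mM moment_M moment_2.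
have hatPi_le n : (n <= M)%N -> `|hatPi_deriv Pi k j n 0| <= BM + `|Pi zpt0|.
  by move=> nM; have := norm_hatPi_deriv_le k j moment_M 0 nM.
have B2_ge0 : 0 <= B2.
  by rewrite (le_trans _ (moment_2 0%N)) // sumr_ge0 // => y _; exact: moment_weight_ge0.
rewrite along_hatPi; apply: even_bound_of_derivs => //.
- by move=> n nm t; exact: is_derive_hatPi_deriv moment_M _ _ (leq_trans nm mM).
- by rewrite (le_trans (hatPi_le _ (leq0n _))) // lerDl mulr_ge0.
- rewrite (le_trans (norm_hatPi_deriv1_le _ _ moment_2)) // [_ * rnorm k * _]mulrAC.
  by rewrite ler_pM2r // lerDr (le_trans (normr_ge0 _) (hatPi_le _ (leq0n _))).
- move=> n /andP[_ nm].
  by rewrite (le_trans (hatPi_le _ (leq_trans nm mM))) // lerDl mulr_ge0.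
Qed.

End LaceProfiles.

Lemma lace_common_form (R : realType) (d : nat) (Pi : zpt d -> R) (p : R)
    (J g : ('I_d -> R) -> R) :
  ((forall k, J k = 2 * d%:R * p * hatD k + hatPi Pi k /\ g k = 1)
   \/ (forall k, J k = 2 * d%:R * p * hatD k * (1 + hatPi Pi k) /\ g k = 1 + hatPi Pi k)
   \/ (exists G0 : R, 0 < G0 /\
         forall k, J k = 2 * d%:R * p * hatD k * (G0 + hatPi Pi k) /\ g k = G0 + hatPi Pi k)) ->
  exists a b l u : R, forall k,
    J k = a * hatD k * (b + l * hatPi Pi k) + u * hatPi Pi k /\ g k = b + l * hatPi Pi k.
Proof.
case=> [Jg|[Jg|[G0 [_ Jg]]]]; exists (2 * d%:R * p).
- by exists 1, 0, 1 => k; have [-> ->] := Jg k; split; ring.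
- by exists 1, 1, 0 => k; have [-> ->] := Jg k; split; ring.
- by exists G0, 1, 0 => k; have [-> ->] := Jg k; split; ring.
Qed.

Section Frequencies.
Variables (R : realType) (d : nat).

Lemma rnorm_gt0 (k : 'I_d -> R) : k <> @zerok R d -> 0 < rnorm k.
Proof.
move=> k_neq0; rewrite sqrtr_gt0 lt_neqAle eq_sym sumr_ge0 ?andbT => [|i _]; last exact: sqr_ge0.
apply: contra_notN k_neq0 => /eqP /psumr_eq0P k0; apply: funext => i.
by apply/eqP; rewrite -sqrf_eq0 k0 // => l _; exact: sqr_ge0.
Qed.

Lemma rnorm_le_torus (k : 'I_d -> R) : in_torus k -> rnorm k <= 1 + d%:R * pi ^+ 2.
Proof.
move=> k_torus; have k2 : rnorm k ^+ 2 <= d%:R * pi ^+ 2.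
  rewrite sqr_sqrtr ?sumr_ge0 // => [|i _]; last exact: sqr_ge0.
  have -> : d%:R * pi ^+ 2 = \sum_(i < d) pi ^+ 2 :> R.
    by rewrite sumr_const card_ord mulr_natl.
  rewrite ler_sum // => i _.
  by have /andP[lo hi] := k_torus i; nra.
have := rnorm_ge0 k; nra.
Qed.

Lemma along0 (f : ('I_d -> R) -> R) k j : along f k j 0 = f k.
Proof. by rewrite /along; congr f; apply: funext => i; case: ifP; rewrite addr0. Qed.

End Frequencies.

Unset Implicit Arguments. Set Strict Implicit.

Theorem lemma4p1 (R : realType) (d : nat) (Pi : zpt d -> R) (p : R)
  (J g : ('I_d -> R) -> R) (M : nat) :
  (3 <= d)%N ->
  Zd_symmetric Pi ->
  moment_finite 2 Pi ->
  0 < p ->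
  ((forall k, J k = 2 * d%:R * p * hatD k + hatPi Pi k /\ g k = 1)
   \/ (forall k, J k = 2 * d%:R * p * hatD k * (1 + hatPi Pi k) /\ g k = 1 + hatPi Pi k)
   \/ (exists G0 : R, 0 < G0 /\
         forall k, J k = 2 * d%:R * p * hatD k * (G0 + hatPi Pi k) /\ g k = G0 + hatPi Pi k)) ->
  J (@zerok R d) = 1 ->
  (exists c1 : R, 0 < c1 /\
     forall k, in_torus k -> J (@zerok R d) - J k >= c1 * rnorm k ^+ 2) ->
  (0 < M)%N ->
  moment_finite M Pi ->
  let hatG := fun k => g k / (1 - J k) in
  forall m : nat, (1 <= m <= M)%N -> forall j : 'I_d,
    exists c : R, forall k : 'I_d -> R, in_torus k -> k <> @zerok R d ->
      @partialn_exists R d m hatG k j /\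
      `| @partialn R d m hatG k j | <= c / rnorm k ^+ (2 + m).
Proof.
move=> d3 _ [B2 moment_2] _ cases J0 [c1 [c1_gt0 J_gap]] _ [BM moment_M] hatG m.
move=> /andP[m_gt0 mM] j; have [a [b [l [u Jg]]]] := lace_common_form cases.
pose D : R := 1 + d%:R * pi ^+ 2.
have D_ge1 : 1 <= D by rewrite lerDl mulr_ge0 ?exprn_ge0 ?pi_ge0.
pose QD := 2 * D ^+ m; pose QP := (BM + `|Pi zpt0| + d%:R * B2) * D ^+ m.
pose Kg := `|b| + `|l| * QP; pose Kv := 1 + (even_mul_const D m (`|a| * QD) Kg + `|u| * QP).
exists (2 ^+ m * (Kg * (D * D) * inv_const c1 Kv m)) => k k_torus k_neq0.
have k_gt0 := rnorm_gt0 k_neq0; have k_le_D := rnorm_le_torus k_torus.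
have bD := even_bound_along_hatD j k_gt0 k_le_D D_ge1 m_gt0 (ltnW (ltnW d3)).
have bP := even_bound_along_hatPi j k_gt0 k_le_D D_ge1 m_gt0 mM moment_M moment_2.
have [bg bv] := even_bound_lace k_gt0 k_le_D D_ge1 a b l u bD bP.
have g_line : along g k j = fun t => b + l * along (hatPi Pi) k j t.
  by apply: funext => t; rewrite /along (Jg _).2.
have J_line : (fun t => 1 - along J k j t) = fun t => 1 - (a * along (@hatD R d) k j t
    * (b + l * along (hatPi Pi) k j t) + u * along (hatPi Pi) k j t).
  by apply: funext => t; rewrite /along (Jg _).1.
rewrite -g_line -J_line in bg bv.
have gap : c1 * rnorm k ^+ 2 <= `|1 - along J k j 0|.
  by rewrite along0 -J0 (le_trans (J_gap k k_torus)) ?ler_norm.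
have bG : deriv_bound (rnorm k) (2 ^+ m * (Kg * (D * D) * inv_const c1 Kv m)) m (-2)
    (along hatG k j) := deriv_bound_div k_gt0 k_le_D D_ge1 c1_gt0 bg bv gap.
split; first by move=> i im; exact: deriv_bound_derivable bG i im.
have := deriv_bound_derive1n k_gt0 (leqnn m) bG.
by rewrite (_ : -2 - m%:Z = - (2 + m)%N%:Z) ?exprnN //; lia.
Qed.
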